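(* Let $\mathcal B$ be a set of bidders with valuations $\{v_b\}$ on $\Omega$ and let $r\ge 0$ be reserve prices. Let $\mathcal B'=\mathcal B\cup\{a\}$ where $a$ is an additional bidder with additive valuation $v_a(S)=r(S)$, and for an allocation $\langle\Omega_b\rangle_{b\in\mathcal B}$ let $\langle\Omega'_{b'}\rangle_{b'\in\mathcal B'}$ be given by $\Omega'_b=\Omega_b$ for $b\in\mathcal B$ and $\Omega'_a=\Omega\setminus\bigcup_{b\in\mathcal B}\Omega_b$. (a1) The allocation $\langle\Omega_b\rangle$ with prices $p$ is a Walrasian equilibrium with reserve prices $r$ for $\mathcal B$ if and only if $\langle\Omega'_{b'}\rangle$ with prices $p'$ is a Walrasian equilibrium for $\mathcal B'$, where $p_j=p'_j$ for $j\in\bigcup_{b\in\mathcal B}\Omega_b$ and $p_{j'}=r_{j'}$ for $j'\in\Omega\setminus\bigcup_{b\in\mathcal B}\Omega_b$. (a2) $\langle\Omega_b\rangle$ is a Walrasian-equilibrium-with-reserve-prices-$r$ allocation if and only if (the 0/1 vector $x_{b,S}=1$ iff $S=\Omega_b$) is an optimal integral solution to the linear program $\mathrm{LP}_r$. (b) If all $v_b$ are gross substitute, then (b1) a Walrasian equilibrium with reserve prices $r$ exists for $\{v_b\}$, and (b2) the set of price vectors of Walrasian equilibria with reserve prices $r$ forms a complete lattice (closed under item-wise $\min$ and $\max$).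
   Context: $\Omega$ is a finite set of items; price vectors $p\in\mathbb{R}^\Omega_{\ge0}$, $p(S)=\sum_{j\in S}p_j$, comparisons item-wise. Each bidder has a monotone valuation $v_b:2^\Omega\to\mathbb{R}$, $v_b(\emptyset)=0$; $D_b(p)$ is the set of $S$ maximizing $v_b(S)-p(S)$. An allocation is a family of pairwise disjoint subsets $\langle\Omega_b\rangle$ of $\Omega$ (items may be unallocated); it is envy free at $p$ if $\Omega_b\in D_b(p)$ for all $b$. A Walrasian equilibrium is an envy-free allocation with prices $p\ge0$ where unallocated items have price $0$. A Walrasian equilibrium with reserve prices $r$ is an envy-free allocation with prices $p\ge r$ where every unallocated item $j$ has $p_j=r_j$. A valuation is gross substitute if for all $p^{(2)}\ge p^{(1)}\ge0$ and every $D^{(1)}\in D(p^{(1)})$ there is $D^{(2)}\in D(p^{(2)})$ containing every $j\in D^{(1)}$ with $p^{(1)}_j=p^{(2)}_j$. $\mathrm{LP}_r$: maximize $\sum_{b\in\mathcal B,S\subseteq\Omega}x_{b,S}v_b(S)+\sum_{j\in\Omega}\big(1-\sum_{b,S\ni j}x_{b,S}\big)r_j$ subject to $\sum_{b,S\ni j}x_{b,S}\le1$ for all $j\in\Omega$, $\sum_{S}x_{b,S}\le 1$ for all $b\in\mathcal B$, $x_{b,S}\ge0$. *)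

From HB Require Import structures.
From mathcomp Require Import all_boot all_order all_algebra.
From mathcomp Require Import reals.
Set Implicit Arguments. Unset Strict Implicit. Unset Printing Implicit Defensive.
Import Order.TTheory GRing.Theory Num.Theory.
Local Open Scope ring_scope.

Section Defs.
Context {R : realType} {Omega : finType}.

Definition price (p : Omega -> R) (S : {set Omega}) : R := \sum_(j in S) p j.

Definition valuation (v : {set Omega} -> R) : Prop :=
  v set0 = 0 /\ (forall S T : {set Omega}, S \subset T -> v S <= v T).

Definition in_demand (v : {set Omega} -> R) (p : Omega -> R) (S : {set Omega}) : Prop :=
  forall T : {set Omega}, v T - price p T <= v S - price p S.

Definition gross_substitute (v : {set Omega} -> R) : Prop :=
  forall p1 p2 : Omega -> R,
    (forall j, 0 <= p1 j) -> (forall j, p1 j <= p2 j) ->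
    forall D1 : {set Omega}, in_demand v p1 D1 ->
    exists D2 : {set Omega}, in_demand v p2 D2 /\
      (forall j, j \in D1 -> p1 j = p2 j -> j \in D2).

Context {I : finType}.

Definition is_allocation (A : I -> {set Omega}) : Prop :=
  forall b c : I, b != c -> [disjoint A b & A c].

Definition allocated (A : I -> {set Omega}) : {set Omega} := \bigcup_(b : I) A b.

Definition envy_free (v : I -> {set Omega} -> R) (A : I -> {set Omega})
  (p : Omega -> R) : Prop := forall b : I, in_demand (v b) p (A b).

Definition walrasian (v : I -> {set Omega} -> R) (A : I -> {set Omega})
  (p : Omega -> R) : Prop :=
  [/\ is_allocation A, envy_free v A p, (forall j, 0 <= p j) &
      (forall j, j \notin allocated A -> p j = 0)].

Definition walrasian_reserve (r : Omega -> R) (v : I -> {set Omega} -> R)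
  (A : I -> {set Omega}) (p : Omega -> R) : Prop :=
  [/\ is_allocation A, envy_free v A p, (forall j, r j <= p j) &
      (forall j, j \notin allocated A -> p j = r j)].

Definition wer_prices (r : Omega -> R) (v : I -> {set Omega} -> R) : (Omega -> R) -> Prop :=
  fun p => exists A, walrasian_reserve r v A p.

Definition lp_feasible (x : I -> {set Omega} -> R) : Prop :=
  [/\ forall b S, 0 <= x b S,
      forall j : Omega, \sum_(b : I) \sum_(S : {set Omega} | j \in S) x b S <= 1 &
      forall b : I, \sum_(S : {set Omega}) x b S <= 1].

Definition lp_objective (r : Omega -> R) (v : I -> {set Omega} -> R)
  (x : I -> {set Omega} -> R) : R :=
  \sum_(b : I) \sum_(S : {set Omega}) x b S * v b S +
  \sum_(j : Omega) (1 - \sum_(b : I) \sum_(S : {set Omega} | j \in S) x b S) * r j.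

Definition lp_optimal (r : Omega -> R) (v : I -> {set Omega} -> R)
  (x : I -> {set Omega} -> R) : Prop :=
  lp_feasible x /\
  forall y, lp_feasible y -> lp_objective r v y <= lp_objective r v x.

Definition integral (x : I -> {set Omega} -> R) : Prop :=
  forall b S, x b S = 0 \/ x b S = 1.

Definition alloc_vector (A : I -> {set Omega}) : I -> {set Omega} -> R :=
  fun b S => if S == A b then 1 else 0.

(* extended market with extra bidder a = None with additive valuation r(S) *)
Definition ext_val (r : Omega -> R) (v : I -> {set Omega} -> R) :
  option I -> {set Omega} -> R :=
  fun b => match b with Some b => v b | None => price r end.

Definition ext_alloc (A : I -> {set Omega}) : option I -> {set Omega} :=
  fun b => match b with Some b => A b | None => ~: allocated A end.

Definition restrict_prices (r : Omega -> R) (A : I -> {set Omega})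
  (p' : Omega -> R) : Omega -> R :=
  fun j => if j \in allocated A then p' j else r j.

End Defs.

(* (a1): the additional bidder's utility r(S) - p(S) is maximised by the
   unallocated items exactly when p >= r on the allocated items and p <= r on
   the others, which translates between the two kinds of equilibria.
   (a2) is LP duality.  Prices p >= r together with utilities u_b form a
   feasible solution of the dual of LP_r; by weak duality the allocation
   vector of an equilibrium is optimal.  Conversely strong duality, obtained
   from Farkas' lemma (proved by Fourier-Motzkin elimination), gives a dual
   solution whose value is the welfare of an optimal allocation, and
   complementary slackness makes it an equilibrium price vector.
   (b1): for gross substitutes valuations an ascending auction with increment
   eps ends in an approximate equilibrium, so every welfare maximising
   allocation is within O(eps) of the optimum of LP_r for every eps, hence
   optimal, and (a2) applies.
   (b2): the prices of any equilibrium support every equilibrium allocation.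
   The indirect utility of a gross substitutes valuation is submodular in the
   prices, which forces a bundle demanded at p and at q to be demanded at
   min(p, q) and max(p, q).  Infima and suprema of equilibrium prices are
   approximated by finite minima and maxima, and demand survives the limit. *)

From HB Require Import structures.
From mathcomp Require Import all_boot all_order all_algebra.
From mathcomp Require Import boolp classical_sets reals.
From mathcomp Require Import ring lra.
Set Implicit Arguments. Unset Strict Implicit. Unset Printing Implicit Defensive.
Import Order.TTheory GRing.Theory Num.Theory.
Local Open Scope ring_scope.

(** * Farkas' lemma *)

Section Farkas.
Variable R : realFieldType.

Lemma sum_if_eq (I : finType) (j : I) (c : R) (f : I -> R) :
  \sum_i (if i == j then c else 0) * f i = c * f j.
Proof. by rewrite (bigD1 j) //= eqxx big1 ?addr0 // => i /negbTE ->; rewrite mul0r. Qed.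

Lemma sum_comb (I J : finType) (l : J -> R) (M : J -> I -> R) (f : I -> R) :
  \sum_i (\sum_j l j * M j i) * f i = \sum_j l j * \sum_i M j i * f i.
Proof.
under eq_bigr do rewrite mulr_suml.
rewrite exchange_big /=; apply: eq_bigr => j _.
by rewrite mulr_sumr; apply: eq_bigr => i _; rewrite mulrA.
Qed.

Definition ineq_feasible (X I : finType) (A : I -> X -> R) (b : I -> R) :=
  exists x : X -> R, forall i, \sum_k A i k * x k <= b i.

Definition farkas_certificate (X I : finType) (A : I -> X -> R) (b : I -> R) :=
  exists l : I -> R, [/\ forall i, 0 <= l i,
     forall k, \sum_i l i * A i k = 0 & \sum_i l i * b i < 0].

(* The hypothesis is [c k / a k <= c i / a i] with denominators cleared: every
   lower bound on [t] is below every upper bound. *)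
Lemma one_var_ineq_feasible (I : finType) (a c : I -> R) :
  (forall i k, 0 < a i -> a k < 0 -> 0 <= c i * - a k + c k * a i) ->
  exists t, forall i, a i != 0 -> a i * t <= c i.
Proof.
move=> Hpair.
case: (pickP (fun i => 0 < a i)) => [i0 Hi0 | Hnp].
  have [im Him Hmin] := @arg_minP _ _ _ i0 [pred i | 0 < a i] (fun i => c i / a i) Hi0.
  have {}Him : 0 < a im := Him.
  exists (c im / a im) => i; have Eim : a im * (c im / a im) = c im.
    by field; rewrite lt0r_neq0.
  case: (ltrgtP (a i) 0) => [Hn _ | Hp _ | //].
    have := Hpair im i Him Hn; move: Eim; set t := c im / a im => <-; nra.
  have Hle : c im / a im <= c i / a i := Hmin i Hp.
  have Ei : a i * (c i / a i) = c i by field; rewrite lt0r_neq0.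
  move: Hle Ei; set t := c im / a im; set u := c i / a i; nra.
case: (pickP (fun i => a i < 0)) => [k0 Hk0 | Hnn].
  have [km _ Hmax] := @arg_maxP _ _ _ k0 [pred i | a i < 0] (fun i => c i / a i) Hk0.
  exists (c km / a km) => i.
  case: (ltrgtP (a i) 0) => [Hn _ | Hp _ | //].
    have Hle : c i / a i <= c km / a km := Hmax i Hn.
    have Ei : a i * (c i / a i) = c i by field; rewrite ltr0_neq0.
    move: Hle Ei; set t := c km / a km; set u := c i / a i; nra.
  by move: (Hnp i); rewrite Hp.
exists 0 => i; case: (ltrgtP (a i) 0) => [Hn _ | Hp _ | //].
  by move: (Hnn i); rewrite Hn.
by move: (Hnp i); rewrite Hp.
Qed.

(* Fourier-Motzkin elimination of a variable with coefficient column [a]: the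
   new rows are the nonnegative combinations [-a k * row i + a i * row k] for
   [a i > 0 > a k], together with the rows [i] where [a i = 0]. *)
Definition fm_comb (I : finType) (a : I -> R) (i' : ((I * I) + I)%type) (i2 : I) : R :=
  match i' with
  | inl (i, k) => if (0 < a i) && (a k < 0) then
                   (if i2 == i then - a k else 0) + (if i2 == k then a i else 0)
                 else 0
  | inr i => if a i == 0 then (if i2 == i then 1 else 0) else 0
  end.

Section FourierMotzkin.
Variables (I : finType) (a : I -> R).

Lemma fm_comb_pair i k (f : I -> R) : 0 < a i -> a k < 0 ->
  \sum_i2 fm_comb a (inl (i, k)) i2 * f i2 = - a k * f i + a i * f k.
Proof.
move=> Hi Hk; rewrite /fm_comb Hi Hk /=.
by under eq_bigr do rewrite mulrDl; rewrite big_split /= !sum_if_eq.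
Qed.

Lemma fm_comb_zero i (f : I -> R) :
  a i = 0 -> \sum_i2 fm_comb a (inr i) i2 * f i2 = f i.
Proof. by move=> Hi; rewrite /fm_comb Hi eqxx sum_if_eq mul1r. Qed.

Lemma fm_comb_eliminates i' : \sum_i2 fm_comb a i' i2 * a i2 = 0.
Proof.
case: i' => [[i k]|i].
  case: (boolP ((0 < a i) && (a k < 0))) => [/andP[Hi Hk]|Hn].
    by rewrite fm_comb_pair //; ring.
  by rewrite /fm_comb (negbTE Hn) big1 // => *; rewrite mul0r.
case: (boolP (a i == 0)) => [/eqP Hi|Hn]; first by rewrite fm_comb_zero.
by rewrite /fm_comb (negbTE Hn) big1 // => *; rewrite mul0r.
Qed.

Lemma fm_comb_ge0 i' i2 : 0 <= fm_comb a i' i2.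
Proof.
case: i' => [[i k]|i] /=; last by case: ifP => // _; case: ifP.
case: (boolP ((0 < a i) && (a k < 0))) => [/andP[Hi Hk]|_] //.
by apply: addr_ge0; case: ifP => // _; lra.
Qed.

End FourierMotzkin.

Section Elimination.
Variables (X I : finType) (A : I -> X -> R) (b : I -> R) (x0 : X).

Let M := fm_comb (A^~ x0).
Definition fm_matrix i' k := \sum_i M i' i * A i k.
Definition fm_vector i' := \sum_i M i' i * b i.

(* The pair rows of the eliminated system say exactly that the bounds they
   impose on the eliminated variable are compatible. *)
Lemma fm_lift_feasible : ineq_feasible fm_matrix fm_vector -> ineq_feasible A b.
Proof.
move=> [x Hx].
pose rest i := \sum_k A i k * x k - A i x0 * x x0.
have Hrow i' : \sum_k fm_matrix i' k * x k = \sum_i M i' i * (rest i + A i x0 * x x0).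
  rewrite /rest; under [RHS]eq_bigr do rewrite subrK.
  by rewrite -sum_comb; apply: eq_bigr => i _; rewrite mulr_suml.
have [t Ht] : exists t, forall i, A i x0 != 0 -> A i x0 * t <= b i - rest i.
  apply: one_var_ineq_feasible => i k Hi Hk.
  by have := Hx (inl (i, k)); rewrite Hrow /fm_vector !fm_comb_pair //; lra.
exists (fun k => if k == x0 then t else x k) => i.
have -> : \sum_k A i k * (if k == x0 then t else x k) = rest i + A i x0 * t.
  rewrite (bigD1 x0) //= eqxx /rest (bigD1 x0 (P := xpredT)) //=.
  under eq_bigr => k /negbTE -> do []; ring.
case: (eqVneq (A i x0) 0) => [Hai|Hai]; last by have := Ht i Hai; lra.
by have := Hx (inr i); rewrite Hrow /fm_vector !fm_comb_zero // Hai; lra.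
Qed.

Lemma fm_lift_certificate :
  farkas_certificate fm_matrix fm_vector -> farkas_certificate A b.
Proof.
move=> [l [Hl0 HlA Hlb]]; exists (fun i => \sum_i' l i' * M i' i); split.
- by move=> i; apply: sumr_ge0 => i' _; rewrite mulr_ge0 // fm_comb_ge0.
- by move=> k; rewrite sum_comb; exact: HlA.
- by rewrite sum_comb.
Qed.

Lemma fm_matrix_eliminated i' : fm_matrix i' x0 = 0.
Proof. exact: fm_comb_eliminates. Qed.

End Elimination.

Lemma farkas_zero_matrix (X I : finType) (A : I -> X -> R) (b : I -> R) :
  (forall i k, A i k = 0) -> ineq_feasible A b \/ farkas_certificate A b.
Proof.
move=> A0; case: (pickP (fun i => b i < 0)) => [i0 Hi0 | Hn].
  right; exists (fun i => if i == i0 then 1 else 0); split.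
  - by move=> i; case: ifP.
  - by move=> k; rewrite big1 // => i _; rewrite A0 mulr0.
  - by rewrite sum_if_eq mul1r.
left; exists (fun _ => 0) => i; rewrite big1 => [|k _]; last by rewrite mulr0.
by rewrite leNgt Hn.
Qed.

Lemma farkas_alternative (X I : finType) (A : I -> X -> R) (b : I -> R) :
  ineq_feasible A b \/ farkas_certificate A b.
Proof.
suff: forall n (Xs : {set X}), #|Xs| = n -> forall (I : finType) (A : I -> X -> R) b,
    (forall i k, k \notin Xs -> A i k = 0) ->
    ineq_feasible A b \/ farkas_certificate A b.
  by move/(_ _ [set: X] erefl I A b); apply=> i k; rewrite inE.
elim=> [|n IH] Xs HXs {}I {}A {}b HA.
  apply: farkas_zero_matrix => i k; apply: HA.
  by move/eqP: HXs; rewrite cards_eq0 => /eqP ->; rewrite inE.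
have [x0 Hx0] : exists x0, x0 \in Xs by apply/set0Pn; rewrite -card_gt0 HXs.
have HXs' : #|Xs :\ x0| = n by move: HXs; rewrite (cardsD1 x0) Hx0 => -[].
have HA' i' k : k \notin Xs :\ x0 -> fm_matrix A x0 i' k = 0.
  rewrite in_setD1 negb_and negbK => /orP[/eqP ->|Hk].
    exact: fm_matrix_eliminated.
  by rewrite /fm_matrix big1 // => i _; rewrite HA // mulr0.
have [/fm_lift_feasible|/fm_lift_certificate] := IH _ HXs' _ _ (fm_vector A b x0) HA'.
  by left.
by right.
Qed.

End Farkas.

(** * Prices and demand *)

Section Prices.
Variables (R : realType) (Omega : finType).
Implicit Types (p q : Omega -> R) (S T : {set Omega}).

Lemma priceD p q S : price (p \+ q) S = price p S + price q S.
Proof. by rewrite /price -big_split. Qed.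

Lemma price0 p : price p finset.set0 = 0.
Proof. by rewrite /price big_set0. Qed.

Lemma ler_price p q S : (forall j, p j <= q j) -> price p S <= price q S.
Proof. by move=> H; apply: ler_sum. Qed.

Lemma eq_price p q S : {in S, p =1 q} -> price p S = price q S.
Proof. exact: eq_bigr. Qed.

Lemma price_indicator p S : price p S = \sum_j (j \in S)%:R * p j.
Proof.
rewrite /price big_mkcond /=; apply: eq_bigr => j _.
by rewrite mulr_natl mulrb.
Qed.

Lemma price_ge_item p S j : (forall k, 0 <= p k) -> j \in S -> p j <= price p S.
Proof.
move=> Hp Hj; rewrite /price (big_setD1 _ Hj) /= lerDl.
exact: sumr_ge0.
Qed.

Lemma price_const_le (e : R) S : 0 <= e -> price (fun=> e) S <= e *+ #|Omega|.
Proof. by move=> He; rewrite /price sumr_const ler_wpMn2l // max_card. Qed.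

Definition single_price (i : Omega) (s : R) : Omega -> R :=
  fun k => if k == i then s else 0.

Lemma price_single i s S : price (single_price i s) S = if i \in S then s else 0.
Proof.
rewrite price_indicator /single_price (bigD1 i) //= eqxx big1 ?addr0.
  by rewrite mulr_natl mulrb.
by move=> k /negbTE ->; rewrite mulr0.
Qed.

Lemma price_allocated (B : finType) (A : B -> {set Omega}) p : is_allocation A ->
  \sum_b price p (A b) = \sum_j (j \in allocated A)%:R * p j.
Proof.
move=> HA; rewrite /price -(partition_disjoint_bigcup _ _ HA) -/(price p _).
exact: price_indicator.
Qed.

Lemma additive_in_demandP w p U :
  in_demand (price w) p U <->
  (forall j, j \notin U -> w j <= p j) /\ (forall j, j \in U -> p j <= w j).
Proof.
have diffE T : price w T - price p T = \sum_j (j \in T)%:R * (w j - p j).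
  by rewrite !price_indicator -sumrB; apply: eq_bigr => j _; rewrite mulrBr.
split=> [HU | [out_le in_ge] T].
  split=> j Hj; [have := HU (j |: U) | have := HU (U :\ j)].
    by rewrite /price !big_setU1 //=; lra.
  by rewrite /price !(big_setD1 _ Hj) /=; lra.
rewrite !diffE; apply: ler_sum => j _.
case: (boolP (j \in U)) => HjU; case: (j \in T); rewrite ?mul1r ?mul0r //.
- by rewrite subr_ge0 in_ge.
- by rewrite subr_le0 out_le.
Qed.

Lemma in_demand_raise_outside (w : {set Omega} -> R) p q S :
  in_demand w p S -> (forall j, p j <= q j) -> {in S, p =1 q} -> in_demand w q S.
Proof.
move=> HS Hpq HSpq T; rewrite -(eq_price HSpq).
by have := HS T; have := ler_price T Hpq; lra.
Qed.

Lemma valuation_ge0 (w : {set Omega} -> R) S : valuation w -> 0 <= w S.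
Proof. by case=> w0 wmono; rewrite -w0 wmono // finset.sub0set. Qed.

End Prices.

(** * The additional bidder *)

Section ReserveBidder.
Variables (R : realType) (Omega B : finType).
Variables (v : B -> {set Omega} -> R) (r : Omega -> R).
Hypothesis hr : forall j, 0 <= r j.
Implicit Types (A : B -> {set Omega}) (p : Omega -> R).

Lemma allocated_ext_alloc A : allocated (ext_alloc A) = [set: Omega].
Proof.
apply/setP => j; rewrite inE; apply/bigcupP.
case: (boolP (j \in allocated A)) => [/bigcupP [b _ Hb] | Hj].
  by exists (Some b).
by exists None => //=; rewrite inE.
Qed.

Lemma is_allocation_ext_alloc A : is_allocation A -> is_allocation (ext_alloc A).
Proof.
move=> HA [b|] [c|] //= Hbc.
- by apply: HA; apply: contraNneq Hbc => ->.
- rewrite finset.disjoints_subset; apply/fintype.subsetP => j Hj.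
  by rewrite !inE negbK; apply/bigcupP; exists b.
- rewrite disjoint_sym finset.disjoints_subset; apply/fintype.subsetP => j Hj.
  by rewrite !inE negbK; apply/bigcupP; exists c.
Qed.

Lemma wer_ext_walrasian A p : walrasian_reserve r v A p ->
  walrasian (ext_val r v) (ext_alloc A) p.
Proof.
case=> HA Hef Hpr Hun; split.
- exact: is_allocation_ext_alloc.
- case=> [b|] /=; first exact: Hef.
  apply/additive_in_demandP; split=> j; rewrite inE ?negbK => Hj; first exact: Hpr.
  by rewrite Hun.
- by move=> j; apply: le_trans (Hpr j).
- by move=> j; rewrite allocated_ext_alloc inE.
Qed.

Lemma ext_walrasian_wer A p' : walrasian (ext_val r v) (ext_alloc A) p' ->
  walrasian_reserve r v A (restrict_prices r A p').
Proof.
case=> HA Hef _ _; have /additive_in_demandP [Hal Hun] := Hef None.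
have restrict_ge j : p' j <= restrict_prices r A p' j.
  by rewrite /restrict_prices; case: ifPn => // Hj; apply: Hun; rewrite inE.
split.
- by move=> b c Hbc; apply: (HA (Some b) (Some c)); apply: contraNneq Hbc => -[->].
- move=> b; apply: in_demand_raise_outside (Hef (Some b)) restrict_ge _ => j Hj.
  by rewrite /restrict_prices ifT //; apply/bigcupP; exists b.
- move=> j; rewrite /restrict_prices; case: ifPn => // Hj.
  by apply: Hal; rewrite inE negbK.
- by move=> j Hj; rewrite /restrict_prices (negbTE Hj).
Qed.

End ReserveBidder.

(** * LP duality *)

Section Duality.
Variables (R : realType) (Omega B : finType).
Variables (v : B -> {set Omega} -> R) (r : Omega -> R).
Hypothesis hv : forall b, valuation (v b).
Implicit Types (A : B -> {set Omega}) (p : Omega -> R) (y : B -> {set Omega} -> R).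

Definition item_load y j := \sum_b \sum_(S : {set Omega} | j \in S) y b S.

(* Unallocated items are valued at their reserve price, as if bought by the
   additional bidder of (a1). *)
Definition welfare A :=
  \sum_b v b (A b) + \sum_j (1 - (j \in allocated A)%:R) * r j.

Definition surplus A p b := v b (A b) - price p (A b).

Lemma sum_price_load y p :
  \sum_b \sum_S y b S * price p S = \sum_j p j * item_load y j.
Proof.
under eq_bigr do under eq_bigr do rewrite price_indicator mulr_sumr.
under eq_bigr do rewrite exchange_big /=.
rewrite exchange_big /=; apply: eq_bigr => j _.
rewrite /item_load mulr_sumr; apply: eq_bigr => b _.
rewrite mulr_sumr [RHS]big_mkcond /=; apply: eq_bigr => S _.
by rewrite mulr_natl mulrb mulrC; case: (j \in S); rewrite ?mul0r ?mulr0.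
Qed.

Lemma lp_weak_duality y p (u : B -> R) :
  lp_feasible y -> (forall j, r j <= p j) -> (forall b, 0 <= u b) ->
  (forall b S, v b S - price p S <= u b) ->
  lp_objective r v y <= \sum_b u b + \sum_j p j.
Proof.
move=> [y_ge0 y_item y_bidder] Hpr Hu0 Hu.
have Hbidder b : \sum_S y b S * v b S <= u b + \sum_S y b S * price p S.
  apply: (@le_trans _ _ (\sum_S y b S * (u b + price p S))).
    by apply: ler_sum => S _; rewrite ler_wpM2l // -lerBlDr Hu.
  under eq_bigr do rewrite mulrDr.
  by rewrite big_split /= -mulr_suml lerD2r ler_piMl.
have Hitem j : p j * item_load y j + (1 - item_load y j) * r j <= p j.
  by have := y_item j; have := Hpr j; rewrite -/(item_load y j); nra.
rewrite /lp_objective -!/(item_load y _).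
apply: (@le_trans _ _ (\sum_b u b + \sum_j (p j * item_load y j +
                                           (1 - item_load y j) * r j))).
  by rewrite big_split /= addrA -sum_price_load -big_split lerD2r; apply: ler_sum.
by rewrite lerD2l; apply: ler_sum.
Qed.

Lemma sum_alloc_vector A b (f : {set Omega} -> R) :
  \sum_S alloc_vector A b S * f S = f (A b).
Proof.
rewrite (bigD1 (A b)) //= /alloc_vector eqxx mul1r big1 ?addr0 // => S /negbTE ->.
by rewrite mul0r.
Qed.

Lemma item_load_alloc_vector A j : is_allocation A ->
  item_load (alloc_vector A) j = (j \in allocated A)%:R.
Proof.
move=> HA.
have Hb b : \sum_(S : {set Omega} | j \in S) alloc_vector (R:=R) A b S =
            price (single_price j 1) (A b).
  rewrite price_single big_mkcond /=.
  rewrite -(sum_alloc_vector A b (fun S => if j \in S then 1 else 0)).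
  by apply: eq_bigr => S _; case: (j \in S); rewrite ?mulr1 ?mulr0.
rewrite /item_load (eq_bigr _ (fun b _ => Hb b)) price_allocated //.
by under eq_bigr do rewrite mulrC; rewrite sum_if_eq mul1r.
Qed.

Lemma lp_objective_alloc_vector A : is_allocation A ->
  lp_objective r v (alloc_vector A) = welfare A.
Proof.
move=> HA; rewrite /lp_objective /welfare.
congr (_ + _); first by apply: eq_bigr => b _; rewrite sum_alloc_vector.
by apply: eq_bigr => j _; rewrite -/(item_load _ j) item_load_alloc_vector.
Qed.

Lemma lp_feasible_alloc_vector A : is_allocation A ->
  lp_feasible (alloc_vector (R:=R) A).
Proof.
move=> HA; split.
- by move=> b S; rewrite /alloc_vector; case: ifP.
- by move=> j; rewrite -/(item_load _ j) item_load_alloc_vector //; case: (j \in _).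
- move=> b; have := sum_alloc_vector A b (fun _ => 1).
  by under eq_bigr do rewrite mulr1; move=> ->.
Qed.

Lemma integral_alloc_vector A : integral (alloc_vector (R:=R) A).
Proof. by move=> b S; rewrite /alloc_vector; case: ifP; [right | left]. Qed.

Lemma sum_split_allocated A p : is_allocation A ->
  \sum_j p j = \sum_b price p (A b) + \sum_j (1 - (j \in allocated A)%:R) * p j.
Proof.
by move=> HA; rewrite price_allocated // -big_split; apply: eq_bigr => j _ /=; ring.
Qed.

Lemma welfare_surplus A p : is_allocation A ->
  (forall j, j \notin allocated A -> p j = r j) ->
  \sum_b surplus A p b + \sum_j p j = welfare A.
Proof.
move=> HA Hun; rewrite (sum_split_allocated p HA) /welfare /surplus sumrB.
have -> : \sum_j (1 - (j \in allocated A)%:R) * p j =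
          \sum_j (1 - (j \in allocated A)%:R) * r j.
  apply: eq_bigr => j _; case: (boolP (j \in allocated A)) => Hj.
    by rewrite subrr !mul0r.
  by rewrite Hun.
lra.
Qed.

(* Complementary slackness: a dual solution (p, u) whose value does not exceed
   the welfare of A makes every term of the duality gap vanish. *)
Lemma wer_of_dual_le_welfare A p (u : B -> R) :
  is_allocation A -> (forall j, r j <= p j) ->
  (forall b S, v b S - price p S <= u b) ->
  \sum_b u b + \sum_j p j <= welfare A -> walrasian_reserve r v A p.
Proof.
move=> HA Hpr Hu Hle.
pose gap b := u b - surplus A p b.
pose slack j := (1 - (j \in allocated A)%:R) * (p j - r j).
have gap_ge0 b : 0 <= gap b by rewrite subr_ge0 Hu.
have slack_ge0 j : 0 <= slack j.
  by rewrite /slack mulr_ge0 ?subr_ge0 ?Hpr //; case: (j \in _); rewrite ?subrr ?subr0.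
have Hgap : \sum_b gap b + \sum_j slack j <= 0.
  have -> : \sum_j slack j = \sum_j (1 - (j \in allocated A)%:R) * p j -
                             \sum_j (1 - (j \in allocated A)%:R) * r j.
    by rewrite -sumrB; apply: eq_bigr => j _; rewrite /slack mulrBr.
  move: Hle; rewrite (sum_split_allocated p HA) /welfare /gap /surplus !sumrB; lra.
have [gap0 slack0] : \sum_b gap b = 0 /\ \sum_j slack j = 0.
  have : 0 <= \sum_b gap b by apply: sumr_ge0.
  have : 0 <= \sum_j slack j by apply: sumr_ge0.
  lra.
split => // [b T | j Hj].
  have := psumr_eq0P (P := xpredT) (fun b _ => gap_ge0 b) gap0 (i := b) isT.
  by have := Hu b T; rewrite /gap /surplus; lra.
have := psumr_eq0P (P := xpredT) (fun j _ => slack_ge0 j) slack0 (i := j) isT.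
by rewrite /slack (negbTE Hj) subr0 mul1r; lra.
Qed.

Lemma wer_surplus A p : walrasian_reserve r v A p ->
  [/\ forall b, 0 <= surplus A p b, forall b S, v b S - price p S <= surplus A p b &
      \sum_b surplus A p b + \sum_j p j = welfare A].
Proof.
case=> HA Hef Hpr Hun; split => // [b | ]; last exact: welfare_surplus.
by have := Hef b finset.set0; rewrite price0 subr0; case: (hv b) => -> _.
Qed.

Lemma wer_lp_bound A p y : walrasian_reserve r v A p -> lp_feasible y ->
  lp_objective r v y <= welfare A.
Proof.
move=> Hw Hy; have [Hu0 Hu <-] := wer_surplus Hw.
by apply: lp_weak_duality => //; case: Hw.
Qed.

Lemma wer_le_welfare A A' p : walrasian_reserve r v A p -> is_allocation A' ->
  welfare A' <= welfare A.
Proof.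
move=> Hw HA'; rewrite -lp_objective_alloc_vector //.
exact/(wer_lp_bound Hw)/lp_feasible_alloc_vector.
Qed.

(* Equilibrium allocations maximise welfare, so the prices of one
   equilibrium support the allocation of any other. *)
Lemma wer_exchange_allocation A A' p q :
  walrasian_reserve r v A p -> walrasian_reserve r v A' q -> walrasian_reserve r v A q.
Proof.
move=> Hp Hq; have [_ Hu Eq] := wer_surplus Hq.
have [HA _ _ _] := Hp; have [HA' _ Hqr _] := Hq.
apply: (wer_of_dual_le_welfare (u := surplus A' q)) => //.
by rewrite Eq (wer_le_welfare Hp HA').
Qed.

(* The dual of LP_r, written as a system [M x <= c] in the variables p_j and
   u_b: rows [-p(S) - u_b <= -v_b(S)], [-p_j <= -r_j], and the budget row
   [sum_j p_j + sum_b u_b <= W0]. *)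
Definition dual_var := (Omega + B)%type.
Definition dual_row := ((B * {set Omega}) + (Omega + unit))%type.

Definition dual_matrix (i : dual_row) (k : dual_var) : R :=
  match i, k with
  | inl (b, T), inl j => - (j \in T)%:R
  | inl (b, _), inr b' => - (b' == b)%:R
  | inr (inl j), inl j' => - (j' == j)%:R
  | inr (inl _), inr _ => 0
  | inr (inr _), _ => 1
  end.

Definition dual_rhs (W0 : R) (i : dual_row) : R :=
  match i with
  | inl (b, T) => - v b T
  | inr (inl j) => - r j
  | inr (inr _) => W0
  end.

Lemma sum_dual_row (F : dual_row -> R) : \sum_i F i =
  \sum_b \sum_S F (inl (b, S)) + (\sum_j F (inr (inl j)) + F (inr (inr tt))).
Proof.
rewrite big_sumType /= pair_big /= big_sumType /=; congr (_ + (_ + _)).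
  by apply: eq_bigr => -[].
by rewrite (bigD1 tt) //= big_pred0 ?addr0 // => -[].
Qed.

Lemma dual_matrix_rows (x : dual_var -> R) :
  [/\ forall b S, \sum_k dual_matrix (inl (b, S)) k * x k =
                  - (price (fun j => x (inl j)) S + x (inr b)),
      forall j, \sum_k dual_matrix (inr (inl j)) k * x k = - x (inl j) &
      \sum_k dual_matrix (inr (inr tt)) k * x k = \sum_j x (inl j) + \sum_b x (inr b)].
Proof.
split=> [b S | j |]; rewrite big_sumType /=.
- under eq_bigr do rewrite mulNr mulr_natl mulrb.
  under [X in _ + X]eq_bigr do rewrite mulNr mulr_natl mulrb.
  by rewrite !sumrN -!big_mkcond big_pred1_eq opprD.
- under eq_bigr do rewrite mulNr mulr_natl mulrb.
  under [X in _ + X]eq_bigr do rewrite mul0r.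
  by rewrite big1_eq addr0 sumrN -big_mkcond big_pred1_eq.
- by under eq_bigr do rewrite mul1r; under [X in _ + X]eq_bigr do rewrite mul1r.
Qed.

Lemma lp_dual_of_feasible (W0 : R) : ineq_feasible dual_matrix (dual_rhs W0) ->
  exists p (u : B -> R), [/\ forall j, r j <= p j,
     forall b S, v b S - price p S <= u b & \sum_b u b + \sum_j p j <= W0].
Proof.
move=> [x Hx]; have [Hbundle Hitem Hbudget] := dual_matrix_rows x.
exists (fun j => x (inl j)), (fun b => x (inr b)); split.
- by move=> j; have := Hx (inr (inl j)); rewrite Hitem /=; lra.
- by move=> b S; have := Hx (inl (b, S)); rewrite Hbundle /=; lra.
- by have := Hx (inr (inr tt)); rewrite Hbudget /=; lra.
Qed.

(* A Farkas certificate for the dual system, divided by the multiplier of the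
   budget row, is a feasible solution of LP_r of value above W0. *)
Section DualCertificate.
Variables (W0 : R) (l : dual_row -> R).
Hypothesis l_ge0 : forall i, 0 <= l i.
Hypothesis l_cols : forall k, \sum_i l i * dual_matrix i k = 0.
Hypothesis l_rhs : \sum_i l i * dual_rhs W0 i < 0.

Let y b S := l (inl (b, S)).
Let mu j := l (inr (inl j)).
Let theta := l (inr (inr tt)).

Lemma certificate_item j : theta = mu j + item_load y j.
Proof.
have := l_cols (inl j); rewrite sum_dual_row /= mulr1.
under eq_bigr do under eq_bigr do rewrite mulrN mulr_natr mulrb.
under [X in _ + (X + _)]eq_bigr do rewrite mulrN mulr_natr mulrb.
rewrite !sumrN -big_mkcond (big_pred1 j) => [|k]; last by rewrite eq_sym.
under eq_bigr do rewrite sumrN -big_mkcond.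
by rewrite sumrN -/(item_load y j) -/(mu j) -/theta; lra.
Qed.

Lemma certificate_bidder b : theta = \sum_S y b S.
Proof.
have := l_cols (inr b); rewrite sum_dual_row /= mulr1.
under eq_bigr do under eq_bigr do rewrite mulrN mulr_natr mulrb.
under [X in _ + (X + _)]eq_bigr do rewrite mulr0.
rewrite big1_eq add0r.
under eq_bigr do rewrite sumrN -big_mkcond.
rewrite sumrN.
have -> : \sum_c \sum_(S : {set Omega} | b == c) l (inl (c, S)) = \sum_S y b S.
  rewrite (bigD1 b) //= [X in _ + X]big1 ?addr0 => [|c Hc].
    by apply: eq_bigl => S; rewrite eqxx.
  by rewrite big_pred0 // => S; rewrite eq_sym (negbTE Hc).
by rewrite -/theta; lra.
Qed.

Lemma certificate_value :
  theta * W0 < \sum_b \sum_S y b S * v b S + \sum_j mu j * r j.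
Proof.
move: l_rhs; rewrite sum_dual_row /=.
under eq_bigr do under eq_bigr do rewrite mulrN.
under [X in _ + (X + _)]eq_bigr do rewrite mulrN.
by under eq_bigr do rewrite sumrN; rewrite !sumrN -/theta; lra.
Qed.

Lemma certificate_theta_gt0 : 0 < theta.
Proof.
rewrite lt_neqAle l_ge0 andbT; apply/eqP => theta0.
have y0 b S : y b S = 0.
  have /esym := certificate_bidder b; rewrite -theta0.
  by move/psumr_eq0P; apply=> // *; apply: l_ge0.
have mu0 j : mu j = 0.
  have := certificate_item j; rewrite -theta0 /item_load.
  by rewrite big1 => [|b _]; [lra | rewrite big1 // => S _; apply: y0].
have := certificate_value; rewrite -theta0 mul0r.
rewrite big1 => [|b _]; last by rewrite big1 // => S _; rewrite y0 mul0r.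
by rewrite big1 => [|j _]; [rewrite addr0 ltxx | rewrite mu0 mul0r].
Qed.

Lemma certificate_lp_violation :
  exists y', lp_feasible y' /\ W0 < lp_objective r v y'.
Proof.
have theta_gt0 := certificate_theta_gt0; have theta_neq0 := lt0r_neq0 theta_gt0.
pose y' b S := y b S / theta.
have load' j : item_load y' j = item_load y j / theta.
  by rewrite /item_load mulr_suml; apply: eq_bigr => b _; rewrite mulr_suml.
exists y'; split; first split.
- by move=> b S; apply: divr_ge0; [exact: l_ge0 | exact: ltW].
- move=> j; rewrite -/(item_load y' j) load' ler_pdivrMr // mul1r.
  have := certificate_item j; have := l_ge0 (inr (inl j)).
  by rewrite -/(mu j); lra.
- by move=> b; rewrite -mulr_suml -certificate_bidder divff.
rewrite /lp_objective -/(item_load y' _).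
have -> : \sum_b \sum_S y' b S * v b S = (\sum_b \sum_S y b S * v b S) / theta.
  rewrite mulr_suml; apply: eq_bigr => b _; rewrite mulr_suml.
  by apply: eq_bigr => S _; rewrite mulrAC.
have -> : \sum_j (1 - item_load y' j) * r j = (\sum_j mu j * r j) / theta.
  rewrite mulr_suml; apply: eq_bigr => j _; rewrite load'.
  have -> : mu j = theta - item_load y j by have := certificate_item j; lra.
  by field.
by rewrite -mulrDl ltr_pdivlMr // mulrC certificate_value.
Qed.

End DualCertificate.

Lemma lp_strong_duality (W0 : R) :
  (forall y, lp_feasible y -> lp_objective r v y <= W0) ->
  exists p (u : B -> R), [/\ forall j, r j <= p j,
     forall b S, v b S - price p S <= u b & \sum_b u b + \sum_j p j <= W0].
Proof.
move=> Hopt; case: (farkas_alternative dual_matrix (dual_rhs W0)).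
  exact: lp_dual_of_feasible.
move=> [l [l_ge0 l_cols l_rhs]].
have [y [Hy HW0]] := certificate_lp_violation l_ge0 l_cols l_rhs.
by have := Hopt y Hy; rewrite leNgt HW0.
Qed.

Lemma wer_iff_lp_optimal A : is_allocation A ->
  (exists p, walrasian_reserve r v A p) <-> lp_optimal r v (alloc_vector A).
Proof.
move=> HA; split=> [[p Hw] | [_ Hopt]].
  split=> [|y Hy]; first exact: lp_feasible_alloc_vector.
  by rewrite lp_objective_alloc_vector //; exact: wer_lp_bound Hw Hy.
have [p [u [Hpr Hu Hle]]] : exists p (u : B -> R), [/\ forall j, r j <= p j,
    forall b S, v b S - price p S <= u b & \sum_b u b + \sum_j p j <= welfare A].
  by apply: lp_strong_duality => y Hy; rewrite -lp_objective_alloc_vector // Hopt.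
by exists p; exact: wer_of_dual_le_welfare Hu Hle.
Qed.

End Duality.

(** * The ascending auction *)

Lemma bounded_ascent (R : archiRealFieldType) (T : Type) (P Q : T -> Prop)
    (phi : T -> R) (M eps : R) :
  0 < eps -> (forall t, P t -> phi t <= M) ->
  (forall t, P t -> ~ Q t -> exists2 t', P t' & phi t + eps <= phi t') ->
  forall t, P t -> exists2 t', P t' & Q t'.
Proof.
move=> eps_gt0 bounded ascent.
suff climb n t : P t -> M - n%:R * eps < phi t -> exists2 t', P t' & Q t'.
  move=> t Pt; have [n Hn] : exists n : nat, (M - phi t) / eps < n%:R.
    exists (Num.bound `|(M - phi t) / eps|).
    exact: le_lt_trans (ler_norm _) (archi_boundP (normr_ge0 _)).
  by apply: (climb n t Pt); move: Hn; rewrite ltr_pdivrMr //; lra.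
elim: n t => [|n IH] t Pt; first by rewrite mul0r subr0 ltNge bounded.
move=> Hn; have [Qt | nQt] := pselect (Q t); first by exists t.
have [t' Pt' Ht'] := ascent t Pt nQt.
by apply: (IH t' Pt'); move: Hn; rewrite -natr1 mulrDl mul1r; lra.
Qed.

Section Auction.
Variables (R : realType) (Omega B : finType).
Variables (v : B -> {set Omega} -> R) (r : Omega -> R).
Hypothesis hv : forall b, valuation (v b).
Hypothesis hr : forall j, 0 <= r j.
Hypothesis GS : forall b, gross_substitute (v b).
Variable eps : R.
Hypothesis eps_gt0 : 0 < eps.
Implicit Types (H : B -> {set Omega}) (p : Omega -> R) (D : {set Omega}).

Definition max_value := \sum_b v b [set: Omega].

Lemma le_max_value b S : v b S <= max_value.
Proof.
have [_ vmono] := hv b; apply: le_trans (vmono _ _ (finset.subsetT S)) _.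
rewrite /max_value (bigD1 b) //= lerDl; apply: sumr_ge0 => c _.
exact: valuation_ge0.
Qed.

Definition bidder_prices H p b : Omega -> R :=
  fun j => if j \in H b then p j else p j + eps.

Definition auction_state H p :=
  [/\ is_allocation H, forall j, j \notin allocated H -> p j = r j,
      forall j, r j <= p j, forall j, p j <= r j + max_value &
      forall b, exists2 D, in_demand (v b) (bidder_prices H p b) D & H b \subset D].

Definition overdemanded H p := exists b D,
  [/\ in_demand (v b) (bidder_prices H p b) D, H b \subset D & H b != D].

Definition reallocate H b0 (D : {set Omega}) : B -> {set Omega} :=
  fun c => if c == b0 then D else H c :\: D.

Definition raise_prices H p b0 (D : {set Omega}) : Omega -> R :=
  fun j => if (j \in D) && (j \notin H b0) then p j + eps else p j.

Lemma bidder_prices_ge0 H p b :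
  (forall j, r j <= p j) -> forall j, 0 <= bidder_prices H p b j.
Proof.
move=> Hpr j; have := hr j; have := Hpr j; rewrite /bidder_prices.
by have := eps_gt0; case: ifP => _ h1 h2 h3; lra.
Qed.

Lemma is_allocation_reallocate H b0 D :
  is_allocation H -> is_allocation (reallocate H b0 D).
Proof.
move=> HA b c Hbc; rewrite /reallocate.
case: ifPn => [/eqP Eb | _]; case: ifPn => [/eqP Ec | _].
- by rewrite Eb Ec eqxx in Hbc.
- by rewrite disjoint_sym finset.disjoints_subset subsetDr.
- by rewrite finset.disjoints_subset subsetDr.
- exact: disjointWl (subsetDl _ _) (disjointWr (subsetDl _ _) (HA b c Hbc)).
Qed.

Lemma allocated_reallocate H b0 (D : {set Omega}) : H b0 \subset D ->
  allocated (reallocate H b0 D) = allocated H :|: D.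
Proof.
move=> HD; apply/setP => j; rewrite inE; apply/bigcupP/orP.
  move=> [c _]; rewrite /reallocate; case: ifP => [_ Hj|_ /setDP [Hj _]]; last first.
    by left; apply/bigcupP; exists c.
  by right.
move=> [/bigcupP [c _ Hj] | Hj]; last by exists b0; rewrite // /reallocate eqxx.
case: (boolP (j \in D)) => HjD; first by exists b0; rewrite // /reallocate eqxx.
exists c => //; rewrite /reallocate; case: ifP => [/eqP Ec | _]; last exact/setDP.
by move/fintype.subsetP: HD => /(_ j); rewrite -Ec Hj (negbTE HjD) => /(_ isT).
Qed.

Lemma raise_prices_ge H p b0 D j : p j <= raise_prices H p b0 D j.
Proof. by rewrite /raise_prices; case: ifP => _; have := eps_gt0; lra. Qed.

Lemma sum_raise_prices H p b0 D : H b0 \subset D -> H b0 != D ->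
  \sum_j p j + eps <= \sum_j raise_prices H p b0 D j.
Proof.
move=> HD HnD; have [j0 Hj0] : exists j0, (j0 \in D) && (j0 \notin H b0).
  apply/existsP; apply: contraNT HnD; rewrite negb_exists => /forallP Hall.
  rewrite finset.eqEsubset HD; apply/fintype.subsetP => j Hj.
  by have := Hall j; rewrite Hj negbK.
suff : eps <= \sum_j (raise_prices H p b0 D j - p j) by rewrite sumrB; lra.
rewrite (bigD1 j0) //= {1}/raise_prices Hj0 (addrAC (p j0)) subrr add0r lerDl.
by apply: sumr_ge0 => j _; rewrite subr_ge0 raise_prices_ge.
Qed.

Lemma raise_prices_bounded H p b0 D :
  (forall j, r j <= p j) -> (forall j, p j <= r j + max_value) ->
  in_demand (v b0) (bidder_prices H p b0) D ->
  forall j, raise_prices H p b0 D j <= r j + max_value.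
Proof.
move=> Hpr Hbd HD j; rewrite /raise_prices.
case: ifP => [/andP [HjD HjH] | _]; last exact: Hbd.
have Hj : p j + eps <= price (bidder_prices H p b0) D.
  have := price_ge_item (bidder_prices_ge0 H b0 Hpr) HjD.
  by rewrite {1}/bidder_prices (negbTE HjH).
have := HD finset.set0; have [v0 _] := hv b0; rewrite v0 price0.
by have := le_max_value b0 D; have := hr j; lra.
Qed.

Lemma bidder_prices_reallocate_self H p b0 D : H b0 \subset D ->
  bidder_prices (reallocate H b0 D) (raise_prices H p b0 D) b0 =1
  bidder_prices H p b0.
Proof.
move=> HD j; rewrite /bidder_prices /reallocate /raise_prices eqxx.
case: (boolP (j \in H b0)) => HjH; case: (boolP (j \in D)) => HjD //=.
by move/fintype.subsetP: HD => /(_ _ HjH); rewrite (negbTE HjD).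
Qed.

Lemma bidder_prices_reallocate_other H p b0 D c : c != b0 ->
  let q := bidder_prices (reallocate H b0 D) (raise_prices H p b0 D) c in
  (forall j, bidder_prices H p c j <= q j) /\
  {in reallocate H b0 D c, bidder_prices H p c =1 q}.
Proof.
move=> Hc q; rewrite /q /bidder_prices /reallocate (negbTE Hc); split.
  move=> j; have := raise_prices_ge H p b0 D j; have := eps_gt0.
  case: ifP => Hj1; case: ifP => [/setDP [Hj2 _] | _] h1 h2; try lra.
  by rewrite Hj2 in Hj1.
move=> j Hj; rewrite Hj; case/setDP: Hj => -> HjD.
by rewrite /raise_prices (negbTE HjD).
Qed.

(* This is where gross substitutability enters: bidders other than [b0] only
   face higher prices on items they do not keep. *)
Lemma reallocate_demand H p b0 D c :
  (forall j, r j <= p j) -> H b0 \subset D ->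
  in_demand (v b0) (bidder_prices H p b0) D ->
  (exists2 Dc, in_demand (v c) (bidder_prices H p c) Dc & H c \subset Dc) ->
  exists2 Dc, in_demand (v c) (bidder_prices (reallocate H b0 D)
                                 (raise_prices H p b0 D) c) Dc &
              reallocate H b0 D c \subset Dc.
Proof.
move=> Hpr HD HdemD [Dc HDc HsDc].
case: (eqVneq c b0) => [-> | Hc].
  exists D; last by rewrite /reallocate eqxx.
  move=> T; rewrite !(eq_price (in1W (bidder_prices_reallocate_self p HD))).
  exact: HdemD.
have [Hle Heq] := bidder_prices_reallocate_other H p D Hc.
have [D2 [HD2 HsD2]] := GS (bidder_prices_ge0 H c Hpr) Hle HDc.
exists D2 => //; apply/fintype.subsetP => j Hj.
have HjH : j \in H c by move: Hj; rewrite /reallocate (negbTE Hc) => /setDP [].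
exact: HsD2 (fintype.subsetP HsDc _ HjH) (Heq j Hj).
Qed.

Lemma auction_state_step H p : auction_state H p -> overdemanded H p ->
  exists2 H'p', auction_state H'p'.1 H'p'.2 & \sum_j p j + eps <= \sum_j H'p'.2 j.
Proof.
case=> HA Hun Hpr Hbd Hdem [b0 [D [HD HsD HnD]]].
exists (reallocate H b0 D, raise_prices H p b0 D); last exact: sum_raise_prices.
split=> /=.
- exact: is_allocation_reallocate.
- move=> j; rewrite allocated_reallocate // inE negb_or => /andP [Hj HjD].
  by rewrite /raise_prices (negbTE HjD) Hun.
- by move=> j; apply: le_trans (raise_prices_ge _ _ _ _ j).
- exact: raise_prices_bounded.
- by move=> c; apply: reallocate_demand.
Qed.

Lemma auction_state_init : auction_state (fun=> finset.set0) r.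
Proof.
split=> //.
- by move=> b c _; rewrite finset.disjoints_subset finset.sub0set.
- by move=> j; rewrite lerDl; apply: sumr_ge0 => b _; exact: valuation_ge0.
- move=> b; pose u S := v b S - price (bidder_prices (fun=> finset.set0) r b) S.
  have [D _ HD] := @arg_maxP _ _ _ finset.set0 xpredT u isT.
  by exists D; [move=> T; exact: HD | exact: finset.sub0set].
Qed.

Lemma auction_terminates : exists H p, auction_state H p /\ ~ overdemanded H p.
Proof.
pose P t := auction_state t.1 t.2.
have bounded t : P t -> \sum_j t.2 j <= \sum_j (r j + max_value).
  by case=> _ _ _ Hbd _; apply: ler_sum => j _; exact: Hbd.
have ascent t : P t -> ~ ~ overdemanded t.1 t.2 ->
    exists2 t', P t' & \sum_j t.2 j + eps <= \sum_j t'.2 j.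
  by move=> HS /contrapT; exact: auction_state_step.
have [[H p] HS Hstable] := bounded_ascent eps_gt0 bounded ascent
  (t := (fun=> finset.set0, r)) auction_state_init.
by exists H, p.
Qed.

Lemma auction_stable H p : auction_state H p -> ~ overdemanded H p ->
  forall b, in_demand (v b) (bidder_prices H p b) (H b).
Proof.
case=> _ _ _ _ Hdem Hstable b; have [D HD HsD] := Hdem b.
case: (eqVneq (H b) D) => [-> // | HnD].
by exfalso; apply: Hstable; exists b, D.
Qed.

(* An auction outcome is an approximate Walrasian equilibrium, hence, by weak
   duality, an approximately optimal solution of LP_r. *)
Lemma auction_approx_optimal : exists2 H, is_allocation H &
  forall y, lp_feasible y ->
    lp_objective r v y <= welfare v r H + eps *+ (#|Omega| * #|B|).
Proof.
have [H [p [HS Hstable]]] := auction_terminates.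
have Hdem := auction_stable HS Hstable.
case: HS => HA Hun Hpr _ _; exists H => // y Hy.
pose u b := surplus v H p b + eps *+ #|Omega|.
have Hu b S : v b S - price p S <= u b.
  have := Hdem b S; rewrite -(eq_price (p := p) (S := H b)) => [|j Hj]; last first.
    by rewrite /bidder_prices Hj.
  have : price (bidder_prices H p b) S <= price p S + eps *+ #|Omega|.
    apply: le_trans (ler_price (q := p \+ (fun=> eps)) _ _) _.
      by move=> j; rewrite /bidder_prices /=; case: ifP => _; have := eps_gt0; lra.
    by rewrite priceD lerD2l price_const_le // ltW.
  rewrite /u /surplus; lra.
have Hu0 b : 0 <= u b.
  by have := Hu b finset.set0; have [-> _] := hv b; rewrite price0; lra.
apply: le_trans (lp_weak_duality Hy Hpr Hu0 Hu) _.
rewrite /u big_split /= sumr_const -addrA [X in _ + X]addrC addrA.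
by rewrite (welfare_surplus v (r := r)) // mulrnA.
Qed.

End Auction.

(** * Indirect utility of gross substitutes valuations *)

Lemma max_loss_mono (R : realDomainType) (a b a' b' s : R) : 0 <= s ->
  (0 < a - b -> a - b <= a' - b') ->
  Num.max a b - Num.max (a - s) b <= Num.max a' b' - Num.max (a' - s) b'.
Proof.
move=> Hs Hmono; rewrite !maxEle.
case: (leP a b); case: (leP (a - s) b); case: (leP a' b'); case: (leP (a' - s) b');
  case: (ltrP 0 (a - b)) => [/Hmono|]; lra.
Qed.

Section IndirectUtility.
Variables (R : realType) (Omega : finType) (w : {set Omega} -> R).
Implicit Types (p q : Omega -> R) (S T : {set Omega}).

Definition payoff p S := w S - price p S.

Definition best_payoff (S0 : {set Omega}) (P : pred {set Omega}) p :=
  payoff p [arg max_(S > S0 | P S) payoff p S]%O.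

Definition indirect_utility := best_payoff finset.set0 xpredT.
Definition utility_with i := best_payoff [set i] (fun S => i \in S).
Definition utility_without i := best_payoff finset.set0 (fun S => i \notin S).

Lemma best_payoffP S0 (P : pred {set Omega}) p : P S0 ->
  (forall S, P S -> payoff p S <= best_payoff S0 P p) /\
  exists2 S : {set Omega}, P S & best_payoff S0 P p = payoff p S.
Proof.
move=> PS0; rewrite /best_payoff.
by case: (@arg_maxP _ _ _ S0 P (payoff p) PS0) => S PS HS; split=> //; exists S.
Qed.

Lemma indirect_utilityP p :
  (forall S, payoff p S <= indirect_utility p) /\
  exists S : {set Omega}, indirect_utility p = payoff p S.
Proof.
have [H1 [S _ HS]] := @best_payoffP finset.set0 xpredT p isT.
by split=> [S'|]; [exact: H1 | exists S].
Qed.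

Lemma utility_withP i p :
  (forall S, i \in S -> payoff p S <= utility_with i p) /\
  exists2 S : {set Omega}, i \in S & utility_with i p = payoff p S.
Proof. by apply: best_payoffP; rewrite inE. Qed.

Lemma utility_withoutP i p :
  (forall S, i \notin S -> payoff p S <= utility_without i p) /\
  exists2 S : {set Omega}, i \notin S & utility_without i p = payoff p S.
Proof. by apply: best_payoffP; rewrite inE. Qed.

Lemma indirect_utility_demand p S :
  in_demand w p S -> indirect_utility p = payoff p S.
Proof.
move=> HS; have [Hle [T ET]] := indirect_utilityP p.
by apply/eqP; rewrite eq_le Hle andbT ET; exact: HS.
Qed.

Lemma payoff_raise p i s S :
  payoff (p \+ single_price i s) S = payoff p S - (if i \in S then s else 0).
Proof. by rewrite /payoff priceD price_single; lra. Qed.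

Lemma indirect_utility_raise p i s :
  indirect_utility (p \+ single_price i s) =
  Num.max (utility_with i p - s) (utility_without i p).
Proof.
have [HV [S ES]] := indirect_utilityP (p \+ single_price i s).
have [Hwith [Sw Hi ESw]] := utility_withP i p.
have [Hwithout [So Hnot ESo]] := utility_withoutP i p.
apply/eqP; rewrite eq_le ge_max; apply/andP; split; last first.
  have := HV Sw; have := HV So.
  rewrite !payoff_raise Hi (negbTE Hnot) subr0 => h1 h2.
  by rewrite ESw ESo h1 h2.
rewrite ES payoff_raise le_max; case: (boolP (i \in S)) => HiS; apply/orP.
  by left; rewrite lerD2r; exact: Hwith.
by right; rewrite subr0; exact: Hwithout.
Qed.

Lemma indirect_utility_split p i :
  indirect_utility p = Num.max (utility_with i p) (utility_without i p).
Proof.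
rewrite -[utility_with i p]subr0 -indirect_utility_raise; congr indirect_utility.
by apply: funext => k; rewrite /= /single_price; case: ifP; rewrite addr0.
Qed.

Definition marginal_value i p := utility_with i p - utility_without i p.

Hypothesis GSw : gross_substitute w.

Lemma marginal_value_raise_other p i j t :
  (forall k, 0 <= p k) -> i != j -> 0 <= t -> 0 < marginal_value i p ->
  marginal_value i p <= marginal_value i (p \+ single_price j t).
Proof.
(* Raising the price of [i] by its marginal value [d] makes a best bundle
   containing [i] demanded; by gross substitutes [i] stays in demand when the
   price of [j] rises, so [i] is still worth [d]. *)
move=> Hp Hij Ht; set d := marginal_value i p => Hd.
pose Q := p \+ single_price i d.
have [Hwith [Sw Hi ESw]] := utility_withP i p.
have [Hwithout _] := utility_withoutP i p.
have HQ : in_demand w Q Sw.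
  move=> T; rewrite -!/(payoff Q _) !payoff_raise Hi -ESw.
  case: (boolP (i \in T)) => HiT; first by have := Hwith T HiT; lra.
  by have := Hwithout T HiT; rewrite /d /marginal_value; lra.
have Q_ge0 k : 0 <= Q k.
  by have := Hp k; rewrite /Q /= /single_price; case: ifP => _; lra.
have Q_le k : Q k <= (Q \+ single_price j t) k.
  by rewrite /= /single_price; case: ifP => _; lra.
have [D2 [HD2 HsD2]] := GSw Q_ge0 Q_le HQ.
have HiD2 : i \in D2.
  by apply: HsD2 => //=; rewrite /single_price (negbTE Hij) addr0.
set p' := p \+ single_price j t.
have EQ T :
    payoff (Q \+ single_price j t) T = payoff p' T - (if i \in T then d else 0).
  by rewrite /p' !payoff_raise addrAC.
have [Hwith' _] := utility_withP i p'.
have [_ [So' Hnot' ESo']] := utility_withoutP i p'.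
have := HD2 So'; rewrite -!/(payoff _ _) !EQ HiD2 (negbTE Hnot') -ESo'.
by have := Hwith' D2 HiD2; rewrite /marginal_value; lra.
Qed.

(* The loss [V p - V (p + s e_i)] equals [max a b - max (a - s) b] for the
   best payoffs [a] with and [b] without [i], a nondecreasing function of the
   marginal value [a - b]. *)
Lemma indirect_utility_loss_mono p i j s t :
  (forall k, 0 <= p k) -> i != j -> 0 <= s -> 0 <= t ->
  indirect_utility p - indirect_utility (p \+ single_price i s) <=
  indirect_utility (p \+ single_price j t) -
  indirect_utility ((p \+ single_price j t) \+ single_price i s).
Proof.
move=> Hp Hij Hs Ht.
rewrite (indirect_utility_raise p) (indirect_utility_raise (p \+ _)).
rewrite (indirect_utility_split p i) (indirect_utility_split (p \+ _) i).
exact: max_loss_mono Hs (marginal_value_raise_other Hp Hij Ht).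
Qed.

Lemma indirect_utility_loss_mono_single i s x y : 0 <= s ->
  (forall k, 0 <= x k) -> (forall k, x k <= y k) -> y i = x i ->
  indirect_utility x - indirect_utility (x \+ single_price i s) <=
  indirect_utility y - indirect_utility (y \+ single_price i s).
Proof.
move=> Hs; move Hn : #|[set k | x k != y k]| => n.
elim: n x Hn => [|n IH] x Hn Hx Hxy Hi.
  suff -> : x = y by [].
  apply: funext => k; apply/eqP/negPn/negP => Hk.
  by move/eqP: Hn; rewrite cards_eq0 => /eqP/setP/(_ k); rewrite !inE Hk.
have [j Hj] : exists j, j \in [set k | x k != y k].
  by apply/set0Pn; rewrite -card_gt0 Hn.
have Hij : i != j by apply: contraTneq Hj => <-; rewrite inE Hi eqxx.
pose x' := x \+ single_price j (y j - x j).
have Hn' : #|[set k | x' k != y k]| = n.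
  have -> : [set k | x' k != y k] = [set k | x k != y k] :\ j.
    apply/setP => k; rewrite !inE /x' /= /single_price.
    by case: ifP => [/eqP -> | _]; rewrite ?addr0 // addrC subrK eqxx.
  by move: Hn; rewrite (cardsD1 j) Hj => -[].
have Hxj : 0 <= y j - x j by rewrite subr_ge0.
apply: le_trans (indirect_utility_loss_mono Hx Hij Hs Hxj) (IH x' Hn' _ _ _).
- move=> k; rewrite /x' /= /single_price.
  by case: ifP => _; have := Hx k; have := Hxy k; lra.
- move=> k; rewrite /x' /= /single_price.
  by case: ifP => [/eqP -> | _]; have := Hxy k; lra.
- by rewrite /x' /= /single_price (negbTE Hij) addr0.
Qed.

Lemma indirect_utility_loss_mono_vec x y z :
  (forall k, 0 <= x k) -> (forall k, x k <= y k) -> (forall k, 0 <= z k) ->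
  (forall k, z k != 0 -> x k = y k) ->
  indirect_utility x - indirect_utility (x \+ z) <=
  indirect_utility y - indirect_utility (y \+ z).
Proof.
move Hn : #|[set k | z k != 0]| => n.
elim: n x y z Hn => [|n IH] x y z Hn Hx Hxy Hz Hzxy.
  have Ez u : u \+ z = u.
    apply: funext => k /=; suff -> : z k = 0 by rewrite addr0.
    apply/eqP/negPn/negP => Hk.
    by move/eqP: Hn; rewrite cards_eq0 => /eqP/setP/(_ k); rewrite !inE Hk.
  by rewrite !Ez !subrr.
have [i Hi] : exists i, i \in [set k | z k != 0].
  by apply/set0Pn; rewrite -card_gt0 Hn.
have Hzi : z i != 0 by rewrite inE in Hi.
pose z' k := if k == i then 0 else z k.
have Ez u : u \+ z = (u \+ single_price i (z i)) \+ z'.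
  apply: funext => k /=; rewrite /single_price /z'.
  by case: ifP => [/eqP -> | _]; rewrite ?addr0.
have Hn' : #|[set k | z' k != 0]| = n.
  have -> : [set k | z' k != 0] = [set k | z k != 0] :\ i.
    by apply/setP => k; rewrite !inE /z'; case: ifP; rewrite ?eqxx.
  by move: Hn; rewrite (cardsD1 i) Hi => -[].
pose e := single_price i (z i).
have H1 := indirect_utility_loss_mono_single (Hz i) Hx Hxy (esym (Hzxy i Hzi)).
have H2 : indirect_utility (x \+ e) - indirect_utility (x \+ e \+ z') <=
          indirect_utility (y \+ e) - indirect_utility (y \+ e \+ z').
  apply: IH Hn' _ _ _ _.
  - move=> k; rewrite /e /= /single_price.
    by case: ifP => _; have := Hx k; have := Hz i; lra.
  - by move=> k; rewrite /=; have := Hxy k; lra.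
  - by move=> k; rewrite /z'; case: ifP.
  - move=> k; rewrite /z' /=.
    by case: ifP => [_ | _ Hk]; [rewrite eqxx | rewrite Hzxy].
by rewrite !Ez -/e; lra.
Qed.

Lemma indirect_utility_submodular p q :
  (forall k, 0 <= p k) -> (forall k, 0 <= q k) ->
  indirect_utility (fun k => Num.min (p k) (q k)) +
  indirect_utility (fun k => Num.max (p k) (q k)) <=
  indirect_utility p + indirect_utility q.
Proof.
(* [z := p - min p q] vanishes where [min p q < q], so adding it to
   [min p q] costs at most as much as adding it to [q]. *)
move=> Hp Hq; pose x k := Num.min (p k) (q k); pose z k := p k - x k.
have Ex : x \+ z = p by apply: funext => k /=; rewrite addrC subrK.
have Ey : q \+ z = (fun k => Num.max (p k) (q k)).
  by apply: funext => k /=; rewrite /z /x; have := addr_min_max (p k) (q k); lra.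
have Hx k : 0 <= x k by rewrite /x le_min Hp Hq.
have Hxq k : x k <= q k by rewrite /x ge_min lexx orbT.
have Hz k : 0 <= z k by rewrite /z subr_ge0 /x ge_min lexx.
have Hzx k : z k != 0 -> x k = q k.
  rewrite /z /x subr_eq0.
  by case: (leP (p k) (q k)); rewrite ?eqxx.
by have := indirect_utility_loss_mono_vec Hx Hxq Hz Hzx; rewrite Ex Ey; lra.
Qed.

Lemma in_demand_min_max p q S :
  (forall k, 0 <= p k) -> (forall k, 0 <= q k) ->
  in_demand w p S -> in_demand w q S ->
  in_demand w (fun k => Num.min (p k) (q k)) S /\
  in_demand w (fun k => Num.max (p k) (q k)) S.
Proof.
move=> Hp Hq HSp HSq.
set m := fun k => Num.min (p k) (q k); set M := fun k => Num.max (p k) (q k).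
have Hsub := indirect_utility_submodular Hp Hq.
rewrite (indirect_utility_demand HSp) (indirect_utility_demand HSq) in Hsub.
have Eprice : price m S + price M S = price p S + price q S.
  by rewrite -!priceD; apply: eq_price => k _; exact: addr_min_max.
have [Hm _] := indirect_utilityP m; have [HM _] := indirect_utilityP M.
have := Hm S; have := HM S; move: Hsub; rewrite /payoff -/m -/M => Hsub hM hm.
by split=> T; [have := Hm T | have := HM T]; rewrite /payoff; lra.
Qed.

End IndirectUtility.

Lemma le_of_le_addn (R : numFieldType) (x y : R) n :
  (forall e, 0 < e -> x <= y + e *+ n) -> x <= y.
Proof.
move=> H; apply/ler_addgt0Pr => e e_gt0.
have n1_gt0 : 0 < n.+1%:R :> R by [].
apply: le_trans (H _ (divr_gt0 e_gt0 n1_gt0)) _; rewrite lerD2l.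
by rewrite -[_ *+ n]mulr_natr mulrAC ler_pdivrMr // ler_pM2l // ler_nat.
Qed.

(** * The lattice of equilibrium prices *)

Local Open Scope classical_set_scope.

Section Approximation.
Variables (R : realType) (T : finType).
Variables (P Q : set (T -> R)).
Hypothesis PQ : P `<=` Q.
Hypothesis P_neq0 : P !=set0.
Variable e : R.
Hypothesis e_gt0 : 0 < e.

Lemma inf_approx_min :
  (forall j, has_lbound [set p j | p in P]) ->
  (forall p q, Q p -> Q q -> Q (fun j => Num.min (p j) (q j))) ->
  exists2 q, Q q & forall j,
    inf [set p j | p in P] <= q j <= inf [set p j | p in P] + e.
Proof.
move=> Hlb Qmin; have [p0 Pp0] := P_neq0.
have has_inf_at j : has_inf [set p j | p in P].
  by split; [exists (p0 j), p0 | exact: Hlb].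
have inf_le p j : P p -> inf [set p j | p in P] <= p j.
  by move=> Pp; apply: ge_inf (Hlb j) _ _; exists p.
suff [q Qq Hq] : exists2 q, Q q & forall j, inf [set p j | p in P] <= q j /\
    (j \in enum T -> q j <= inf [set p j | p in P] + e).
  by exists q => // j; have [-> /(_ (mem_enum _ j))] := Hq j.
elim: (enum T) => [|j s [q Qq Hq]].
  by exists p0 => [|j]; [exact: PQ | split => //; exact: inf_le].
have [_ [pj Pj <-] Hpj] := inf_adherent e_gt0 (has_inf_at j).
exists (fun k => Num.min (q k) (pj k)); first exact/Qmin/PQ.
move=> k; have [Hqk Hsk] := Hq k; split; first by rewrite le_min Hqk inf_le.
rewrite in_cons => /orP [/eqP -> | Hk]; rewrite ge_min; apply/orP.
  by right; apply: ltW.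
by left; apply: Hsk.
Qed.

Lemma sup_approx_max :
  (forall j, has_ubound [set p j | p in P]) ->
  (forall p q, Q p -> Q q -> Q (fun j => Num.max (p j) (q j))) ->
  exists2 q, Q q & forall j,
    sup [set p j | p in P] - e <= q j <= sup [set p j | p in P].
Proof.
move=> Hub Qmax; have [p0 Pp0] := P_neq0.
have has_sup_at j : has_sup [set p j | p in P].
  by split; [exists (p0 j), p0 | exact: Hub].
have le_sup p j : P p -> p j <= sup [set p j | p in P].
  by move=> Pp; apply: ub_le_sup (Hub j) _ _; exists p.
suff [q Qq Hq] : exists2 q, Q q & forall j, q j <= sup [set p j | p in P] /\
    (j \in enum T -> sup [set p j | p in P] - e <= q j).
  by exists q => // j; have [-> /(_ (mem_enum _ j))] := Hq j; rewrite andbT.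
elim: (enum T) => [|j s [q Qq Hq]].
  by exists p0 => [|j]; [exact: PQ | split => //; exact: le_sup].
have [_ [pj Pj <-] Hpj] := sup_adherent e_gt0 (has_sup_at j).
exists (fun k => Num.max (q k) (pj k)); first exact/Qmax/PQ.
move=> k; have [Hqk Hsk] := Hq k; split; first by rewrite ge_max Hqk le_sup.
rewrite in_cons => /orP [/eqP -> | Hk]; rewrite le_max; apply/orP.
  by right; apply: ltW.
by left; apply: Hsk.
Qed.

End Approximation.

Lemma in_demand_of_approx (R : realType) (Omega : finType)
    (w : {set Omega} -> R) (pi : Omega -> R) (S : {set Omega}) :
  (forall e, 0 < e -> exists2 q, in_demand w q S &
     forall j, pi j <= q j + e /\ q j <= pi j + e) ->
  in_demand w pi S.
Proof.
move=> Happrox T; apply: (@le_of_le_addn _ _ _ (#|Omega| + #|Omega|)) => e e_gt0.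
have [q HqS Hq] := Happrox e e_gt0.
have price_approx (p p' : Omega -> R) (U : {set Omega}) :
    (forall j, p j <= p' j + e) -> price p U <= price p' U + e *+ #|Omega|.
  move=> Hpp'; apply: le_trans (ler_price U Hpp') _.
  by rewrite priceD lerD2l price_const_le // ltW.
have := HqS T; have := price_approx _ _ T (fun j => (Hq j).2).
by have := price_approx _ _ S (fun j => (Hq j).1); rewrite mulrnDr; lra.
Qed.

Section Equilibria.
Variables (R : realType) (Omega B : finType).
Variables (v : B -> {set Omega} -> R) (r : Omega -> R).
Hypothesis hv : forall b, valuation (v b).
Hypothesis hr : forall j, 0 <= r j.
Implicit Types (A : B -> {set Omega}) (p q : Omega -> R).

Lemma exists_welfare_max : exists2 A, is_allocation A &
  forall A', is_allocation A' -> welfare v r A' <= welfare v r A.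
Proof.
pose alloc (A : {ffun B -> {set Omega}}) :=
  [forall b, forall c, (b != c) ==> [disjoint A b & A c]].
have allocP (A : {ffun B -> {set Omega}}) : reflect (is_allocation A) (alloc A).
  apply: (iffP forallP) => [H b c | H b].
    by move/forallP: (H b) => /(_ c) /implyP.
  by apply/forallP => c; apply/implyP; exact: H.
have alloc0 : alloc [ffun=> finset.set0].
  by apply/allocP => b c _; rewrite ffunE finset.disjoints_subset finset.sub0set.
have [A /allocP HA Hmax] := @arg_maxP _ _ _ _ alloc (welfare v r) alloc0.
exists A => // A' HA'.
have EA' : (finfun A' : B -> {set Omega}) = A' by apply: funext => b; rewrite ffunE.
by rewrite -EA'; apply: Hmax; apply/allocP; rewrite EA'.
Qed.

Lemma wer_prices_common_allocation (P : set (Omega -> R)) :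
  P `<=` wer_prices r v -> P !=set0 ->
  exists A, forall p, P p -> walrasian_reserve r v A p.
Proof.
move=> HP [p0 Pp0]; have [A HA] := HP p0 Pp0.
by exists A => p Pp; have [A' HA'] := HP p Pp; exact: wer_exchange_allocation HA HA'.
Qed.

Lemma wer_le_max_value A p : walrasian_reserve r v A p ->
  forall j, p j <= r j + max_value v.
Proof.
move=> Hw j; have [HA _ Hpr Hun] := Hw; have [Hsurplus _ _] := wer_surplus hv Hw.
have Hmax_ge0 : 0 <= max_value v by apply: sumr_ge0 => b _; exact: valuation_ge0.
case: (boolP (j \in allocated A)) => [/bigcupP [b _ Hb] | Hj]; last first.
  by rewrite Hun ?lerDl.
have p_ge0 k : 0 <= p k := le_trans (hr k) (Hpr k).
have := price_ge_item p_ge0 Hb; have := Hsurplus b; rewrite /surplus.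
by have := le_max_value hv b (A b); have := hr j; lra.
Qed.

Section GrossSubstitutes.
Hypothesis GS : forall b, gross_substitute (v b).

Lemma welfare_max_lp_bound A :
  (forall A', is_allocation A' -> welfare v r A' <= welfare v r A) ->
  forall y, lp_feasible y -> lp_objective r v y <= welfare v r A.
Proof.
move=> Hmax y Hy; apply: (@le_of_le_addn _ _ _ (#|Omega| * #|B|)) => e e_gt0.
have [A' HA' Happrox] := auction_approx_optimal hv hr GS e_gt0.
by apply: le_trans (Happrox y Hy) _; rewrite lerD2r Hmax.
Qed.

Lemma exists_wer : exists A p, walrasian_reserve r v A p.
Proof.
have [A HA Hmax] := exists_welfare_max.
have Hopt : lp_optimal r v (alloc_vector A).
  split=> [|y Hy]; first exact: lp_feasible_alloc_vector.
  by rewrite lp_objective_alloc_vector //; exact: welfare_max_lp_bound.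
by have [p Hp] := (wer_iff_lp_optimal r hv HA).2 Hopt; exists A, p.
Qed.

Lemma wer_min_max A p q :
  walrasian_reserve r v A p -> walrasian_reserve r v A q ->
  walrasian_reserve r v A (fun j => Num.min (p j) (q j)) /\
  walrasian_reserve r v A (fun j => Num.max (p j) (q j)).
Proof.
move=> [HA Hep Hpr Hup] [_ Heq Hqr Huq].
have p_ge0 k : 0 <= p k := le_trans (hr k) (Hpr k).
have q_ge0 k : 0 <= q k := le_trans (hr k) (Hqr k).
have Hd := fun b => in_demand_min_max (@GS b) p_ge0 q_ge0 (Hep b) (Heq b).
split; split=> //.
- by move=> b; case: (Hd b).
- by move=> j; rewrite le_min Hpr Hqr.
- by move=> j Hj; rewrite Hup // Huq // minxx.
- by move=> b; case: (Hd b).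
- by move=> j; rewrite le_max Hpr.
- by move=> j Hj; rewrite Hup // Huq // maxxx.
Qed.

Lemma wer_prices_min_max p q : wer_prices r v p -> wer_prices r v q ->
  wer_prices r v (fun j => Num.min (p j) (q j)) /\
  wer_prices r v (fun j => Num.max (p j) (q j)).
Proof.
move=> [A Hp] [A' Hq].
have [Hmin Hmax] := wer_min_max Hp (wer_exchange_allocation hv Hp Hq).
by split; exists A.
Qed.

Lemma wer_prices_inf (P : set (Omega -> R)) : P `<=` wer_prices r v -> P !=set0 ->
  wer_prices r v (fun j => inf [set p j | p in P]).
Proof.
move=> HP P_neq0; have [A PA] := wer_prices_common_allocation HP P_neq0.
have [p0 Pp0] := P_neq0; have [HA _ _ Hun0] := PA p0 Pp0.
have Hlb j : has_lbound [set p j | p in P].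
  by exists (r j) => _ [p Pp <-]; case: (PA p Pp).
set pi := fun j => _.
have inf_le p j : P p -> pi j <= p j by move=> Pp; apply: ge_inf (Hlb j) _ _; exists p.
have r_le j : r j <= pi j.
  by apply: lb_le_inf; [exists (p0 j), p0 | move=> _ [p Pp <-]; case: (PA p Pp)].
exists A; split=> // [b | j Hj].
  apply: in_demand_of_approx => e e_gt0.
  have [q [_ Hq _ _] Hqpi] := inf_approx_min PA P_neq0 e_gt0 Hlb
    (fun p q Hp Hq => (wer_min_max Hp Hq).1).
  exists q => [|j]; first exact: Hq.
  by have /andP [h1 h2] := Hqpi j; rewrite /pi; split; lra.
by apply/eqP; rewrite eq_le r_le andbT -(Hun0 j Hj); exact: inf_le.
Qed.

Lemma wer_prices_sup (P : set (Omega -> R)) : P `<=` wer_prices r v -> P !=set0 ->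
  wer_prices r v (fun j => sup [set p j | p in P]).
Proof.
move=> HP P_neq0; have [A PA] := wer_prices_common_allocation HP P_neq0.
have [p0 Pp0] := P_neq0; have [HA _ Hpr0 Hun0] := PA p0 Pp0.
have Hub j : has_ubound [set p j | p in P].
  by exists (r j + max_value v) => _ [p Pp <-]; exact: wer_le_max_value (PA p Pp) j.
set pi := fun j => _.
have le_sup p j : P p -> p j <= pi j.
  by move=> Pp; apply: ub_le_sup (Hub j) _ _; exists p.
exists A; split=> // [b | j | j Hj].
- apply: in_demand_of_approx => e e_gt0.
  have [q [_ Hq _ _] Hqpi] := sup_approx_max PA P_neq0 e_gt0 Hub
    (fun p q Hp Hq => (wer_min_max Hp Hq).2).
  exists q => [|j]; first exact: Hq.
  by have /andP [h1 h2] := Hqpi j; rewrite /pi; split; lra.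
- exact: le_trans (Hpr0 j) (le_sup _ _ Pp0).
- apply/eqP; rewrite eq_le -{2}(Hun0 j Hj) le_sup // andbT.
  apply: ge_sup; first by exists (p0 j), p0.
  by move=> _ [p Pp <-]; have [_ _ _ ->] := PA p Pp.
Qed.

End GrossSubstitutes.

End Equilibria.

Unset Implicit Arguments.

Theorem theorem4 (R : realType) (Omega B : finType)
  (v : B -> {set Omega} -> R) (r : Omega -> R)
  (hv : forall b, valuation (v b)) (hr : forall j, 0 <= r j) :
  (* (a1) *)
  ((forall (A : B -> {set Omega}) (p : Omega -> R),
      walrasian_reserve r v A p -> walrasian (ext_val r v) (ext_alloc A) p) /\
   (forall (A : B -> {set Omega}) (p' : Omega -> R),
      walrasian (ext_val r v) (ext_alloc A) p' ->
      walrasian_reserve r v A (restrict_prices r A p'))) /\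
  (* (a2) *)
  (forall A : B -> {set Omega}, is_allocation A ->
      (exists p, walrasian_reserve r v A p) <->
      (integral (alloc_vector (R:=R) A) /\
       lp_optimal r v (alloc_vector A))) /\
  (* (b) *)
  ((forall b, gross_substitute (v b)) ->
     (exists A p, walrasian_reserve r v A p) /\
     (forall p q, wer_prices r v p -> wer_prices r v q ->
        wer_prices r v (fun j => Num.min (p j) (q j)) /\
        wer_prices r v (fun j => Num.max (p j) (q j))) /\
     (forall P : set (Omega -> R), P `<=` wer_prices r v -> P !=set0 ->
        wer_prices r v (fun j => inf [set p j | p in P]) /\
        wer_prices r v (fun j => sup [set p j | p in P]))).
Proof.
split; first by split=> A p; [exact: wer_ext_walrasian | exact: ext_walrasian_wer].
split.
  move=> A HA; have := wer_iff_lp_optimal r hv HA.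
  by have := integral_alloc_vector R A; tauto.
move=> GS; split; first exact: exists_wer.
split; first by move=> p q; exact: wer_prices_min_max.
by move=> P HP P_neq0; split; [exact: wer_prices_inf | exact: wer_prices_sup].
Qed.
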